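(* Let $X$ be a toric Fano cone singularity given by a full-dimensional simplicial cone $\sigma\subset N_\mathbb{R}$ with primitive ray generators $v_1,\dots,v_n$ (an $\mathbb{R}$-basis of $N_\mathbb{R}$), and let $\xi$ be in the interior of $\sigma$. Then $(X,\xi)$ is K-stable if and only if $\xi$ is a positive multiple of $v_1+\dots+v_n$. In particular every toric Sasaki-Einstein structure on a rational homology sphere is quasi-regular.
   Context: For a toric cone singularity, K-stability of the polarised pair $(X,\xi)$ is equivalent to the condition that $\hat\xi=\xi/\langle u^*,\xi\rangle$ is a critical point of the volume function $w\mapsto\mathrm{Vol}(\sigma^\vee(w))$ restricted to the affine hyperplane $\{w:\langle u^*,w\rangle=1\}$, where $\sigma^\vee(w)=\{u\in\sigma^\vee:\langle u,w\rangle\le1\}$ and the canonical weight $u^*\in M_\mathbb{R}$ is defined by $\langle u^*,v_\rho\rangle=1$ for all primitive ray generators $v_\rho$ of $\sigma$. A Sasakian structure (with Reeb field $\xi$) is quasi-regular if $\xi$ is a positive real multiple of an element of $N_\mathbb{Q}$. *)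

From Stdlib Require Import Reals Lra Lia ZArith QArith Qreals List Classical ClassicalEpsilon.
Open Scope R_scope.

(* Vectors of N_R = M_R = R^n are functions nat -> R; only coordinates j < n matter.
   The lattice N = M = Z^n. *)

Fixpoint rsum (n : nat) (f : nat -> R) : R :=
  match n with
  | O => 0
  | S k => rsum k f + f k
  end.

Definition dot (n : nat) (u w : nat -> R) : R := rsum n (fun j => u j * w j).

Definition zvec (z : nat -> Z) : nat -> R := fun j => IZR (z j).

Definition primitive_vec (n : nat) (z : nat -> Z) : Prop :=
  forall d : Z, (forall j, (j < n)%nat -> (d | z j)%Z) -> Z.abs d = 1%Z.

Definition lin_indep (n : nat) (v : nat -> nat -> Z) : Prop :=
  forall c : nat -> R,
    (forall j, (j < n)%nat -> rsum n (fun i => c i * IZR (v i j)) = 0) ->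
    forall i, (i < n)%nat -> c i = 0.

Definition in_sigma (n : nat) (v : nat -> nat -> Z) (y : nat -> R) : Prop :=
  exists a : nat -> R, (forall i, (i < n)%nat -> 0 <= a i) /\
    forall j, (j < n)%nat -> y j = rsum n (fun i => a i * IZR (v i j)).

Definition in_interior_sigma (n : nat) (v : nat -> nat -> Z) (xi : nat -> R) : Prop :=
  exists eps, 0 < eps /\
    forall y : nat -> R, (forall j, (j < n)%nat -> Rabs (y j - xi j) < eps) ->
      in_sigma n v y.

Definition in_dual (n : nat) (v : nat -> nat -> Z) (u : nat -> R) : Prop :=
  forall y, in_sigma n v y -> 0 <= dot n u y.

Definition dual_trunc (n : nat) (v : nat -> nat -> Z) (w : nat -> R) (u : nat -> R) : Prop :=
  in_dual n v u /\ dot n u w <= 1.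

(* Volume (Jordan content) of K in R^n, w.r.t. the lattice Z^n:
   V = lim_{m -> oo} #{ z in Z^n : z/m in K } / m^n. *)
Definition lattice_pt (n : nat) (z : list Z) (m : nat) : nat -> R :=
  fun j => IZR (nth j z 0%Z) / INR m.

Definition has_volume (n : nat) (K : (nat -> R) -> Prop) (V : R) : Prop :=
  forall eps, 0 < eps -> exists M : nat, forall m : nat, (M <= m)%nat -> (1 <= m)%nat ->
    exists L : list (list Z), NoDup L /\
      (forall z, In z L <-> (length z = n /\ K (lattice_pt n z m))) /\
      Rabs (INR (length L) / (INR m ^ n) - V) < eps.

(* Vol(K): the volume if it exists (unique), else an arbitrary value *)
Definition Vol (n : nat) (K : (nat -> R) -> Prop) : R :=
  epsilon (inhabits 0) (has_volume n K).

Definition volfun (n : nat) (v : nat -> nat -> Z) (w : nat -> R) : R :=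
  Vol n (dual_trunc n v w).

Definition canonical_weight (n : nat) (v : nat -> nat -> Z) (ustar : nat -> R) : Prop :=
  forall i, (i < n)%nat -> dot n ustar (zvec (v i)) = 1.

Definition critical_on_hyperplane (n : nat) (f : (nat -> R) -> R) (ustar w0 : nat -> R) : Prop :=
  dot n ustar w0 = 1 /\
  forall h : nat -> R, dot n ustar h = 0 ->
    derivable_pt_lim (fun t => f (fun j => w0 j + t * h j)) 0 0.

(* K-stability of (X_sigma, xi) for the toric cone singularity (via the
   volume-minimisation characterisation given in the paper) *)
Definition Kstable (n : nat) (v : nat -> nat -> Z) (xi : nat -> R) : Prop :=
  exists ustar, canonical_weight n v ustar /\
    critical_on_hyperplane n (volfun n v) ustar
      (fun j => xi j / dot n ustar xi).

Definition quasi_regular (n : nat) (xi : nat -> R) : Prop :=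
  exists c : R, 0 < c /\ exists q : nat -> Q, forall j, (j < n)%nat -> xi j = c * Q2R (q j).

From Stdlib Require Import Reals ZArith QArith Qreals Lra Lia List ClassicalEpsilon.
From mathcomp Require ssreflect ssrfun ssrbool eqtype ssrnat seq fintype bigop ssralg matrix Rstruct.
Open Scope R_scope.

(* In the coordinates [b_i] of [w] in the basis [v_i], the truncated dual cone
   is the simplex [{u | <u, v_i> >= 0, sum_i b_i <u, v_i> <= 1}].  Through
   [z |-> (<z, v_i>)_i] its lattice points become the points of the pairing
   lattice in [{k >= 0 | sum_i b_i k_i <= m}]; this lattice contains [D Z^n]
   for [D = det(v)^2], so counting residues modulo [D] and the points of a
   dilated standard simplex gives [Vol = Q / prod_i b_i] with [Q > 0]
   independent of [w].  On the hyperplane [<u^*, w> = 1], i.e. [sum_i b_i = 1],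
   the function [1 / prod_i b_i] is critical exactly where all [b_i] agree,
   that is where [xi] is a multiple of the integral vector [sum_i v_i]. *)

(** * Finite sums *)

Lemma rsum_ext n f g : (forall i, (i < n)%nat -> f i = g i) -> rsum n f = rsum n g.
Proof.
induction n; intros H; simpl; auto.
rewrite IHn by (intros; apply H; lia). rewrite H by lia. reflexivity.
Qed.

Lemma rsum_add n f g : rsum n (fun i => f i + g i) = rsum n f + rsum n g.
Proof. induction n; simpl; [lra|]. rewrite IHn; lra. Qed.

Lemma rsum_scal n c f : rsum n (fun i => c * f i) = c * rsum n f.
Proof. induction n; simpl; [lra|]. rewrite IHn; lra. Qed.

Lemma rsum_opp n f : rsum n (fun i => - f i) = - rsum n f.
Proof. induction n; simpl; [lra|]. rewrite IHn; lra. Qed.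

Lemma rsum_sub n f g : rsum n (fun i => f i - g i) = rsum n f - rsum n g.
Proof.
unfold Rminus. rewrite rsum_add, rsum_opp. reflexivity.
Qed.

Lemma rsum_zero n : rsum n (fun _ => 0) = 0.
Proof. induction n; simpl; [lra|]. rewrite IHn; lra. Qed.

Lemma rsum_comm n m (f : nat -> nat -> R) :
  rsum n (fun i => rsum m (fun j => f i j)) = rsum m (fun j => rsum n (fun i => f i j)).
Proof.
induction n; simpl.
- symmetry. apply rsum_zero.
- rewrite IHn, <- rsum_add. reflexivity.
Qed.

Lemma rsum_ge0 n f : (forall i, (i < n)%nat -> 0 <= f i) -> 0 <= rsum n f.
Proof.
induction n; intros H; simpl; [lra|].
assert (0 <= f n) by (apply H; lia).
assert (0 <= rsum n f) by (apply IHn; intros; apply H; lia). lra.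
Qed.

Lemma rsum_le n f g : (forall i, (i < n)%nat -> f i <= g i) -> rsum n f <= rsum n g.
Proof.
induction n; intros H; simpl; [lra|].
assert (f n <= g n) by (apply H; lia).
assert (rsum n f <= rsum n g) by (apply IHn; intros; apply H; lia). lra.
Qed.

Lemma rsum_term_le n f j :
  (j < n)%nat -> (forall i, (i < n)%nat -> 0 <= f i) -> f j <= rsum n f.
Proof.
induction n; intros Hj H; [lia|]. simpl.
assert (0 <= f n) by (apply H; lia).
destruct (Nat.eq_dec j n) as [->|].
- assert (0 <= rsum n f) by (apply rsum_ge0; intros; apply H; lia). lra.
- assert (f j <= rsum n f) by (apply IHn; [lia|intros; apply H; lia]). lra.
Qed.

Definition kron (i k : nat) : R := if Nat.eqb i k then 1 else 0.

Lemma kron_sym i k : kron i k = kron k i.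
Proof. unfold kron. rewrite Nat.eqb_sym. reflexivity. Qed.

Lemma rsum_kron n i f : (i < n)%nat -> rsum n (fun k => kron k i * f k) = f i.
Proof.
induction n; intros H; [lia|]. simpl. unfold kron at 2.
destruct (Nat.eqb_spec n i) as [->|].
- rewrite (rsum_ext _ _ (fun _ => 0)), rsum_zero; [lra|].
  intros k Hk. unfold kron. destruct (Nat.eqb_spec k i); [lia|lra].
- rewrite IHn by lia. lra.
Qed.

Lemma rsum_shift n f : rsum (S n) f = f 0%nat + rsum n (fun i => f (S i)).
Proof. induction n; simpl in *; [lra|]. rewrite IHn. lra. Qed.

Lemma rsum_telescope K (F : nat -> R) : rsum K (fun j => F j - F (S j)) = F 0%nat - F K.
Proof. induction K; simpl; [lra|]. rewrite IHK. lra. Qed.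

Fixpoint rprod (n : nat) (f : nat -> R) : R :=
  match n with O => 1 | S k => rprod k f * f k end.

Lemma rprod_ext n f g : (forall i, (i < n)%nat -> f i = g i) -> rprod n f = rprod n g.
Proof.
induction n; intros H; simpl; auto.
rewrite IHn by (intros; apply H; lia). rewrite H by lia. reflexivity.
Qed.

Lemma rprod_pos n f : (forall i, (i < n)%nat -> 0 < f i) -> 0 < rprod n f.
Proof.
induction n; intros H; simpl; [lra|].
apply Rmult_lt_0_compat; [apply IHn; intros|]; apply H; lia.
Qed.

Lemma rprod_scal n c f : rprod n (fun i => c * f i) = c ^ n * rprod n f.
Proof. induction n; simpl; [lra|]. rewrite IHn. ring. Qed.

Fixpoint zsum (n : nat) (f : nat -> Z) : Z :=
  match n with O => 0%Z | S k => (zsum k f + f k)%Z end.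

Lemma zsum_IZR n f : IZR (zsum n f) = rsum n (fun i => IZR (f i)).
Proof. induction n; simpl; auto. rewrite plus_IZR, IHn. auto. Qed.

Lemma nth_map_seq {A} (f : nat -> A) n i d :
  (i < n)%nat -> nth i (map f (seq 0 n)) d = f i.
Proof.
intros H. rewrite nth_indep with (d' := f 0%nat) by (rewrite length_map, length_seq; auto).
rewrite map_nth, seq_nth by auto. auto.
Qed.

Lemma fold_Rplus_map_seq f n : fold_right Rplus 0 (map f (seq 0 n)) = rsum n f.
Proof.
induction n; [reflexivity|].
rewrite seq_S, map_app, fold_right_app. simpl. rewrite <- IHn.
generalize (map f (seq 0 n)). intros l; induction l; simpl; [lra|]. rewrite IHl. lra.
Qed.

Lemma fold_Rmult_map_seq f n : fold_right Rmult 1 (map f (seq 0 n)) = rprod n f.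
Proof.
induction n; [reflexivity|].
rewrite seq_S, map_app, fold_right_app. simpl. rewrite <- IHn.
generalize (map f (seq 0 n)). intros l; induction l; simpl; [lra|]. rewrite IHl. lra.
Qed.

Lemma length_flat_map_seq {A B} (f : A -> list B) (g : nat -> A) K :
  INR (length (flat_map f (map g (seq 0 K)))) = rsum K (fun j => INR (length (f (g j)))).
Proof.
induction K; [reflexivity|].
rewrite seq_S, map_app, flat_map_app, length_app, plus_INR, IHK.
simpl. rewrite app_nil_r. auto.
Qed.

Lemma length_flat_map_bounds {A B} (f : A -> list B) l lo hi :
  (forall x, In x l -> lo <= INR (length (f x)) <= hi) ->
  INR (length l) * lo <= INR (length (flat_map f l)) <= INR (length l) * hi.
Proof.
induction l as [|a l IH]; intros H; cbn [flat_map length]; [simpl; lra|].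
rewrite length_app, plus_INR, S_INR.
assert (IHl := IH (fun x Hx => H x (or_intror Hx))).
assert (Ha := H a (or_introl eq_refl)). lra.
Qed.

Lemma NoDup_flat_map {A B} (f : A -> list B) (l : list A) :
  NoDup l -> (forall x, In x l -> NoDup (f x)) ->
  (forall x y b, In x l -> In y l -> In b (f x) -> In b (f y) -> x = y) ->
  NoDup (flat_map f l).
Proof.
induction l as [|a l IH]; intros Hl Hf Hd; simpl; [constructor|].
inversion Hl; subst. apply NoDup_app.
- apply Hf; simpl; auto.
- apply IH; auto.
  + intros; apply Hf; simpl; auto.
  + intros; eapply Hd; simpl; eauto.
- intros b Hb Hb'. apply in_flat_map in Hb'. destruct Hb' as [y [Hy Hby]].
  assert (a = y) by (eapply Hd; simpl; eauto). subst. auto.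
Qed.

Lemma NoDup_map_inj {A B} (f : A -> B) l : NoDup l ->
  (forall x y, In x l -> In y l -> f x = f y -> x = y) -> NoDup (map f l).
Proof. intros H1 H2. apply NoDup_map_NoDup_ForallPairs. 2: exact H1. intros x y Hx Hy; apply H2; auto. Qed.

Lemma NoDup_map_cons_flat_map (f : nat -> list (list nat)) K :
  (forall a, NoDup (f a)) -> NoDup (flat_map (fun a => map (cons a) (f a)) (seq 0 K)).
Proof.
intros Hf. apply NoDup_flat_map; [apply seq_NoDup| |].
- intros a _. apply NoDup_map_inj; auto. intros y z _ _ H; inversion H; auto.
- intros a b l _ _ Ha Hb. apply in_map_iff in Ha, Hb.
  destruct Ha as [? [<- _]], Hb as [? [E _]]. inversion E; auto.
Qed.

Lemma nth_ext_n {A} n (l l' : list A) d : length l = n -> length l' = n ->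
  (forall i, (i < n)%nat -> nth i l d = nth i l' d) -> l = l'.
Proof. intros H1 H2 H. apply nth_ext with d d; [lia|]. intros i Hi. apply H. lia. Qed.

(** * Coordinates in the basis [v] *)

Definition zpair (n : nat) (v : nat -> nat -> Z) (z : nat -> Z) (i : nat) : R :=
  rsum n (fun j => IZR (z j) * IZR (v i j)).

(* Exported statements use [Rmult] and [IZR 0] rather than [*] and [0], which
   denote the [GRing] operations under [ring_scope]. *)
Module BasisMatrix.
Import ssreflect ssrfun ssrbool eqtype ssrnat seq fintype bigop ssralg matrix Rstruct.
Import GRing.Theory.
Local Open Scope ring_scope.

Lemma rsum_big (n : nat) (f : nat -> R) : rsum n f = \sum_(i < n) f i.
Proof. by elim: n => [|n IH] /=; rewrite ?big_ord0 // big_ord_recr /= IH. Qed.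

Definition basis_mx (n : nat) (v : nat -> nat -> Z) : 'M[R]_n := \matrix_(i, j) IZR (v i j).

Definition ext0 {n : nat} (c : 'I_n -> R) (i : nat) : R :=
  if insub i is Some k then c k else 0.

Lemma ext0E n (c : 'I_n -> R) (i : 'I_n) : ext0 c i = c i.
Proof. by rewrite /ext0 (insubT (fun k => (k < n)%N) (ltn_ord i)) /=; congr c; apply: val_inj. Qed.

Definition mx_entry {n : nat} (M : 'M[R]_n) (i j : nat) : R :=
  ext0 (fun a => ext0 (fun b => M a b) j) i.

Lemma mx_entryE n (M : 'M[R]_n) (a b : 'I_n) : mx_entry M a b = M a b.
Proof. by rewrite /mx_entry !ext0E. Qed.

Lemma basis_mx_unit n v : lin_indep n v -> basis_mx n v \in unitmx.
Proof.
move=> Hli; rewrite unitmxE unitfE; apply/negP => /det0P [c /negP cn0 cA].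
apply: cn0; apply/eqP/matrixP => a i; rewrite mxE (ord1 a).
have := Hli (ext0 (fun k => c ord0 k)) _ i (ltP (ltn_ord i)).
rewrite ext0E; apply => j /ltP Hj.
rewrite rsum_big.
transitivity ((c *m basis_mx n v) ord0 (Ordinal Hj)); last by rewrite cA mxE.
by rewrite mxE; apply: eq_bigr => k _; rewrite ext0E mxE.
Qed.

Definition coord (n : nat) (v : nat -> nat -> Z) (w : nat -> R) (i : nat) : R :=
  rsum n (fun j => Rmult (w j) (mx_entry (invmx (basis_mx n v)) j i)).

Lemma coord_repr n v : lin_indep n v -> forall (w : nat -> R) j, (j < n)%coq_nat ->
  w j = rsum n (fun i => Rmult (coord n v w i) (IZR (v i j))).
Proof.
move=> Hli w j /ltP Hj.
set wr : 'rV[R]_n := \row_k w k.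
have E : wr *m invmx (basis_mx n v) *m basis_mx n v = wr by rewrite mulmxKV ?basis_mx_unit.
transitivity (wr ord0 (Ordinal Hj)); first by rewrite mxE.
rewrite -E mxE rsum_big; apply: eq_bigr => i _.
rewrite !mxE; congr (_ * _).
by rewrite /coord rsum_big; apply: eq_bigr => k _; rewrite /wr !mxE mx_entryE.
Qed.

Lemma canonical_weight_exists n v : lin_indep n v -> exists u, canonical_weight n v u.
Proof.
move=> Hli; exists (fun j => rsum n (mx_entry (invmx (basis_mx n v)) j)) => i /ltP Hi.
have E : basis_mx n v *m invmx (basis_mx n v) = 1%:M by rewrite mulmxV ?basis_mx_unit.
transitivity (\sum_(k < n) (basis_mx n v *m invmx (basis_mx n v)) (Ordinal Hi) k); last first.
  rewrite E (bigD1 (Ordinal Hi)) //= mxE eqxx /= big1 ?addr0 // => k Hk.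
  by rewrite mxE eq_sym (negbTE Hk).
rewrite /dot rsum_big.
under eq_bigr => j _ do rewrite rsum_big big_distrl /=.
rewrite exchange_big /=; apply: eq_bigr => k _; rewrite mxE; apply: eq_bigr => j _.
by rewrite mx_entryE /zvec mxE mulrC.
Qed.

Lemma pairing_eq0 n v : lin_indep n v -> forall z : nat -> R,
  (forall i, (i < n)%coq_nat -> rsum n (fun j => Rmult (z j) (IZR (v i j))) = IZR 0) ->
  forall j, (j < n)%coq_nat -> z j = IZR 0.
Proof.
move=> Hli z Hz j /ltP Hj.
set zc : 'cV[R]_n := \col_k z k.
have E0 : basis_mx n v *m zc = 0.
  apply/matrixP => i a; rewrite (ord1 a) [RHS]mxE.
  transitivity (rsum n (fun j => Rmult (z j) (IZR (v i j)))); last exact: Hz i (ltP (ltn_ord i)).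
  by rewrite rsum_big mxE; apply: eq_bigr => k _; rewrite !mxE mulrC.
have : zc = 0 by rewrite -(mulKmx (basis_mx_unit _ _ Hli) zc) E0 mulmx0.
by move/matrixP => /(_ (Ordinal Hj) ord0); rewrite !mxE.
Qed.

Definition is_int (x : R) : Prop := exists z : Z, x = IZR z.

Lemma is_int_sign (k : nat) : is_int ((-1) ^+ k).
Proof.
by rewrite -signr_odd; case: odd; [exists (-1)%Z; rewrite expr1 | exists 1%Z; rewrite expr0].
Qed.

Lemma is_int_det {n} (M : 'M[R]_n) : (forall i j, is_int (M i j)) -> is_int (\det M).
Proof.
have isZD x y : is_int x -> is_int y -> is_int (x + y).
  by move=> [a ->] [b ->]; exists (a + b)%Z; rewrite plus_IZR.
have isZM x y : is_int x -> is_int y -> is_int (x * y).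
  by move=> [a ->] [b ->]; exists (a * b)%Z; rewrite mult_IZR.
move=> HM; apply: (big_ind is_int) => //; first by exists 0%Z.
move=> s _; apply: (isZM); first exact: is_int_sign.
by apply: (big_ind is_int) => //; exists 1%Z.
Qed.

Lemma is_int_adj {n} (M : 'M[R]_n) : (forall i j, is_int (M i j)) -> forall i j, is_int (\adj M i j).
Proof.
move=> HM i j; rewrite mxE /cofactor.
have [a Ea] : is_int (\det (row' j (col' i M))) by apply: is_int_det => a b; rewrite !mxE.
have [b Eb] := is_int_sign (j + i).
by rewrite Ea Eb; exists (b * a)%Z; rewrite mult_IZR.
Qed.

(* The integer matrix [D * A^-1], with [D = det(A)^2 > 0], is [det(A) adj(A)]. *)
Lemma scaled_dual_basis n v : lin_indep n v -> exists D : Z, (0 < D)%Z /\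
  forall i, (i < n)%coq_nat -> exists z : nat -> Z, forall i', (i' < n)%coq_nat ->
    zpair n v z i' = Rmult (kron i' i) (IZR D).
Proof.
move=> Hli; have Hd : \det (basis_mx n v) != 0 by rewrite -unitfE -unitmxE basis_mx_unit.
have HZ : forall i j, is_int (basis_mx n v i j) by move=> i j; rewrite mxE; exists (v i j).
have [d Ed] := is_int_det _ HZ.
have d_neq0 : d <> 0%Z by move=> E; move: Hd; rewrite Ed E eqxx.
exists (d * d)%Z; split; first lia.
move=> i /ltP Hi.
pose zint (x : R) : Z := epsilon (inhabits 0%Z) (fun z => x = IZR z).
have zintE x : is_int x -> IZR (zint x) = x.
  by move=> H; symmetry; apply: (epsilon_spec (inhabits 0%Z) (fun z => x = IZR z) H).
exists (fun j => d * zint (mx_entry (\adj (basis_mx n v)) j i))%Z => i' /ltP Hi'.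
have := congr1 (fun M : 'M[R]_n => M (Ordinal Hi') (Ordinal Hi)) (mul_mx_adj (basis_mx n v)).
rewrite !mxE /= => E.
transitivity (IZR d * (\sum_j basis_mx n v (Ordinal Hi') j * \adj (basis_mx n v) j (Ordinal Hi))).
  rewrite /zpair rsum_big big_distrr; apply eq_bigr => k _.
  rewrite mult_IZR -/(nat_of_ord (Ordinal Hi)) mx_entryE zintE; last exact: (is_int_adj _ HZ).
  by rewrite !mxE /= !RmultE mulrAC -mulrA.
rewrite E Ed mult_IZR /kron RmultE.
case: (PeanoNat.Nat.eqb_spec i' i) => [Eii|Hne].
  have -> : (Ordinal Hi' == Ordinal Hi) = true by apply/eqP/val_inj; rewrite /= Eii.
  by rewrite mulr1n mul1r.
have -> : (Ordinal Hi' == Ordinal Hi) = false by apply/negbTE/negP => /eqP [].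
by rewrite mulr0n mulr0 mul0r.
Qed.

End BasisMatrix.

Import BasisMatrix.

Section Coordinates.
Variables (n : nat) (v : nat -> nat -> Z).
Hypothesis Hli : lin_indep n v.

Lemma coord_unique w a :
  (forall j, (j < n)%nat -> w j = rsum n (fun i => a i * IZR (v i j))) ->
  forall i, (i < n)%nat -> coord n v w i = a i.
Proof.
intros Hw i Hi.
enough (coord n v w i - a i = 0) by lra.
apply (Hli (fun k => coord n v w k - a k)); auto. intros j Hj.
rewrite (rsum_ext _ _ (fun k => coord n v w k * IZR (v k j) - a k * IZR (v k j))) by (intros; ring).
rewrite rsum_sub, <- coord_repr, <- Hw by auto. ring.
Qed.

Lemma coord_linear al be w h i :
  coord n v (fun j => al * w j + be * h j) i = al * coord n v w i + be * coord n v h i.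
Proof. unfold coord. rewrite <- !rsum_scal, <- rsum_add. apply rsum_ext; intros; ring. Qed.

Lemma coord_ext w w' i : (forall j, (j < n)%nat -> w j = w' j) -> coord n v w i = coord n v w' i.
Proof. intros H; unfold coord; apply rsum_ext; intros; rewrite H; auto. Qed.

Lemma coord_affine w h t i :
  coord n v (fun j => w j + t * h j) i = coord n v w i + coord n v h i * t.
Proof.
rewrite (coord_ext _ (fun j => 1 * w j + t * h j)) by (intros; ring).
rewrite coord_linear. ring.
Qed.

Lemma coord_div w s i : coord n v (fun j => w j / s) i = coord n v w i / s.
Proof.
rewrite (coord_ext _ (fun j => / s * w j + 0 * w j)) by (intros; unfold Rdiv; ring).
rewrite coord_linear. unfold Rdiv; ring.
Qed.

Lemma coord_generator i k : (i < n)%nat -> (k < n)%nat -> coord n v (zvec (v i)) k = kron k i.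
Proof.
intros Hi Hk. apply (coord_unique _ (fun k => kron k i)); auto. intros j Hj.
rewrite rsum_kron by auto. reflexivity.
Qed.

Lemma dot_coord u w : dot n u w = rsum n (fun i => coord n v w i * dot n u (zvec (v i))).
Proof.
unfold dot.
rewrite (rsum_ext _ _ (fun j => rsum n (fun i => u j * (coord n v w i * IZR (v i j))))).
- rewrite rsum_comm. apply rsum_ext. intros i _. rewrite <- rsum_scal.
  apply rsum_ext. intros j _. unfold zvec. ring.
- intros j Hj. rewrite (coord_repr n v Hli w j Hj), <- rsum_scal. reflexivity.
Qed.

Lemma dot_canonical_weight u w :
  canonical_weight n v u -> dot n u w = rsum n (coord n v w).
Proof.
intros Hu. rewrite dot_coord. apply rsum_ext. intros i Hi. rewrite Hu; auto; ring.
Qed.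

Lemma in_sigma_generator i : (i < n)%nat -> in_sigma n v (zvec (v i)).
Proof.
intros Hi. exists (fun k => kron k i). split.
- intros k _; unfold kron; destruct (Nat.eqb k i); lra.
- intros j Hj. rewrite rsum_kron by auto. reflexivity.
Qed.

Lemma in_dual_iff u :
  in_dual n v u <-> (forall i, (i < n)%nat -> 0 <= dot n u (zvec (v i))).
Proof.
split.
- intros H i Hi. apply H, in_sigma_generator; auto.
- intros H y [a [Ha Hy]]. rewrite dot_coord.
  apply rsum_ge0. intros i Hi. rewrite (coord_unique y a Hy i Hi).
  apply Rmult_le_pos; auto.
Qed.

Lemma coord_sigma_ge0 y : in_sigma n v y -> forall i, (i < n)%nat -> 0 <= coord n v y i.
Proof. intros [a [Ha Hy]] i Hi. rewrite (coord_unique y a Hy i Hi). auto. Qed.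

(* Moving from [xi] against [sum_i v_i] stays in the cone, so each coordinate
   of [xi] exceeds that small displacement. *)
Lemma coord_interior_pos xi :
  in_interior_sigma n v xi -> forall i, (i < n)%nat -> 0 < coord n v xi i.
Proof.
intros [eps [He Hint]] i Hi.
set (s := fun j => rsum n (fun k => IZR (v k j))).
set (M := rsum n (fun j => Rabs (s j))).
assert (HM : 0 <= M) by (apply rsum_ge0; intros; apply Rabs_pos).
set (del := eps / (2 * (M + 1))).
assert (Hdel : 0 < del) by (unfold del; apply Rdiv_lt_0_compat; lra).
assert (Hs : coord n v s i = 1).
{ apply (coord_unique s (fun _ => 1)); auto. intros j Hj. unfold s. apply rsum_ext; intros; ring. }
assert (Hy : in_sigma n v (fun j => 1 * xi j + (- del) * s j)).
{ apply Hint. intros j Hj.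
  replace (1 * xi j + - del * s j - xi j) with (- (del * s j)) by ring.
  rewrite Rabs_Ropp, Rabs_mult, (Rabs_right del) by lra.
  assert (Rabs (s j) <= M)
    by (apply (rsum_term_le n (fun j => Rabs (s j))); auto; intros; apply Rabs_pos).
  apply Rle_lt_trans with (del * M); [apply Rmult_le_compat_l; lra|].
  unfold del. apply Rmult_lt_reg_r with (2 * (M + 1)); [lra|]. field_simplify; nra. }
assert (H := coord_sigma_ge0 _ Hy i Hi).
rewrite coord_linear, Hs in H. lra.
Qed.

End Coordinates.

(** * Lattice points of simplices *)

Lemma pow_diff_bounds m p q : 0 <= p <= q ->
  INR (S m) * (q - p) * p ^ m <= q ^ S m - p ^ S m <= INR (S m) * (q - p) * q ^ m.
Proof.
intros Hpq. induction m as [|m [IH1 IH2]]; [simpl; lra|].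
assert (E : q ^ S (S m) - p ^ S (S m) = q * (q ^ S m - p ^ S m) + p ^ S m * (q - p))
  by (simpl; ring).
rewrite E, (S_INR (S m)).
assert (Hpm : p ^ S m <= q ^ S m) by (apply pow_incr; lra).
assert (0 <= p ^ m) by (apply pow_le; lra).
assert (0 <= INR (S m)) by apply pos_INR.
split.
- assert (p * (INR (S m) * (q - p) * p ^ m) <= q * (q ^ S m - p ^ S m)).
  { apply Rle_trans with (q * (INR (S m) * (q - p) * p ^ m)).
    - apply Rmult_le_compat_r; [|lra]. apply Rmult_le_pos; [apply Rmult_le_pos|]; lra.
    - apply Rmult_le_compat_l; lra. }
  simpl in *. nra.
- assert (q * (q ^ S m - p ^ S m) <= q * (INR (S m) * (q - p) * q ^ m))
    by (apply Rmult_le_compat_l; lra).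
  assert (p ^ S m * (q - p) <= q ^ S m * (q - p)) by (apply Rmult_le_compat_r; lra).
  simpl in *. nra.
Qed.

Definition pos_pow (x : R) (k : nat) : R := if Rle_dec 0 x then x ^ k else 0.

Lemma pos_pow_ge0 x k : 0 <= pos_pow x k.
Proof. unfold pos_pow. destruct (Rle_dec 0 x); [apply pow_le|]; lra. Qed.

Lemma pos_pow_le x y k : x <= y -> pos_pow x k <= pos_pow y k.
Proof.
intros H. unfold pos_pow.
destruct (Rle_dec 0 x), (Rle_dec 0 y); try lra.
- apply pow_incr; lra.
- apply pow_le; lra.
Qed.

Lemma pos_pow_step_le d a q : 0 < a -> 0 <= q ->
  pos_pow q (S d) - pos_pow (q - a) (S d) <= INR (S d) * a * q ^ d.
Proof.
intros Ha Hq. unfold pos_pow.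
destruct (Rle_dec 0 q); [|lra]. destruct (Rle_dec 0 (q - a)).
- destruct (pow_diff_bounds d (q - a) q) as [_ Hu]; [lra|].
  replace (q - (q - a)) with a in Hu by ring. exact Hu.
- assert (0 <= q ^ d) by (apply pow_le; lra).
  assert (1 <= INR (S d)) by (apply (le_INR 1); lia).
  replace (q ^ S d) with (q * q ^ d) by (simpl; ring).
  assert (q * q ^ d <= a * q ^ d) by (apply Rmult_le_compat_r; lra).
  assert (a * q ^ d <= INR (S d) * (a * q ^ d)) by (rewrite <- (Rmult_1_l (a * q ^ d)) at 1; apply Rmult_le_compat_r; nra).
  lra.
Qed.

Lemma pos_pow_step_ge d a p : 0 < a -> 0 <= p ->
  INR (S d) * a * p ^ d <= pos_pow (p + a) (S d) - pos_pow p (S d).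
Proof.
intros Ha Hp. unfold pos_pow.
destruct (Rle_dec 0 (p + a)); [|lra]. destruct (Rle_dec 0 p); [|lra].
destruct (pow_diff_bounds d p (p + a)) as [Hl _]; [lra|].
replace (p + a - p) with a in Hl by ring. exact Hl.
Qed.

Definition all_pos (c : list R) : Prop := forall a, In a c -> 0 < a.

Lemma all_pos_tail a c : all_pos (a :: c) -> 0 < a /\ all_pos c.
Proof. intros H. split; [|intros x Hx]; apply H; simpl; auto. Qed.

Fixpoint wsum (c : list R) (j : list nat) : R :=
  match c, j with
  | a :: cs, x :: js => a * INR x + wsum cs js
  | _, _ => 0
  end.

(* The first coordinate ranges below [up (T / a)], beyond every admissible value. *)
Fixpoint simplex_pts (c : list R) (T : R) : list (list nat) :=
  match c with
  | nil => if Rle_dec 0 T then nil :: nil else nil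
  | a :: cs => flat_map (fun x => map (cons x) (simplex_pts cs (T - a * INR x)))
                        (seq 0 (Z.to_nat (up (T / a))))
  end.

Lemma wsum_ge0 c j : all_pos c -> 0 <= wsum c j.
Proof.
revert j; induction c as [|a c IH]; intros j H; destruct j; simpl; try lra.
destruct (all_pos_tail _ _ H) as [Ha Hc].
assert (0 <= INR n) by apply pos_INR.
assert (0 <= wsum c j) by auto. nra.
Qed.

Lemma lt_up_INR (x : nat) (y : R) : INR x <= y -> (x < Z.to_nat (up y))%nat.
Proof.
intros H. destruct (archimed y) as [H1 _].
assert (Hp : (0 < up y)%Z) by (apply lt_IZR; assert (0 <= INR x) by apply pos_INR; lra).
apply INR_lt. rewrite (INR_IZR_INZ (Z.to_nat _)), Z2Nat.id by lia. lra.
Qed.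

Lemma up_div_gt a T : 0 < a -> 0 <= T -> T - a * INR (Z.to_nat (up (T / a))) < 0.
Proof.
intros Ha HT. destruct (archimed (T / a)) as [H1 _].
assert (0 <= T / a) by (apply Rmult_le_pos; [lra|left; apply Rinv_0_lt_compat; lra]).
assert (Hp : (0 < up (T / a))%Z) by (apply lt_IZR; lra).
rewrite INR_IZR_INZ, Z2Nat.id by lia.
assert (T = a * (T / a)) by (field; lra). nra.
Qed.

Lemma in_simplex_pts c T j : all_pos c ->
  In j (simplex_pts c T) <-> length j = length c /\ wsum c j <= T.
Proof.
revert T j; induction c as [|a c IH]; intros T j Hc; simpl.
- destruct (Rle_dec 0 T); simpl; split.
  + intros [<-|[]]; simpl; split; [auto|lra].
  + intros [H1 H2]. destruct j; simpl in H1; [auto|lia].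
  + intros [].
  + intros [H1 H2]. destruct j; simpl in *; [lra|lia].
- destruct (all_pos_tail _ _ Hc) as [Ha Hc'].
  rewrite in_flat_map. split.
  + intros [x [Hx Hj]]. apply in_map_iff in Hj. destruct Hj as [j' [<- Hj']].
    apply IH in Hj'; auto. simpl. split; [lia|lra].
  + intros [H1 H2]. destruct j as [|x j]; simpl in H1; [lia|]. simpl in H2.
    exists x. split.
    * apply in_seq. split; [lia|]. simpl. apply lt_up_INR.
      assert (0 <= wsum c j) by (apply wsum_ge0; auto).
      apply Rmult_le_reg_l with a; auto. field_simplify; lra.
    * apply in_map. apply IH; auto. split; [lia|lra].
Qed.

Lemma simplex_pts_NoDup c T : all_pos c -> NoDup (simplex_pts c T).
Proof.
revert T; induction c as [|a c IH]; intros T Hc; simpl.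
- destruct (Rle_dec 0 T); repeat constructor; auto.
- apply NoDup_map_cons_flat_map. intros x. apply IH, (all_pos_tail _ _ Hc).
Qed.

Lemma simplex_pts_neg c T : all_pos c -> T < 0 -> simplex_pts c T = nil.
Proof.
intros Hc HT. destruct (simplex_pts c T) as [|j l] eqn:E; auto.
assert (Hj : In j (simplex_pts c T)) by (rewrite E; simpl; auto).
apply in_simplex_pts in Hj; auto. destruct Hj.
assert (0 <= wsum c j) by (apply wsum_ge0; auto). lra.
Qed.

Lemma length_simplex_pts_cons a c T : INR (length (simplex_pts (a :: c) T)) =
  rsum (Z.to_nat (up (T / a))) (fun x => INR (length (simplex_pts c (T - a * INR x)))).
Proof.
simpl. rewrite <- (map_id (seq 0 _)), length_flat_map_seq.
apply rsum_ext. intros; rewrite length_map; auto.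
Qed.

Definition prodl (c : list R) := fold_right Rmult 1 c.
Definition suml (c : list R) := fold_right Rplus 0 c.

Lemma suml_ge0 c : all_pos c -> 0 <= suml c.
Proof.
induction c as [|a c IH]; simpl; intros H; [lra|].
destruct (all_pos_tail _ _ H) as [Ha Hc]. assert (0 <= suml c) by auto. lra.
Qed.

Lemma prodl_pos c : all_pos c -> 0 < prodl c.
Proof.
induction c as [|a c IH]; simpl; intros H; [lra|].
destruct (all_pos_tail _ _ H) as [Ha Hc]. assert (0 < prodl c) by auto. nra.
Qed.

Lemma fact_S_INR d : INR (fact (S d)) = INR (S d) * INR (fact d).
Proof. rewrite <- mult_INR. reflexivity. Qed.

(* Each layer [x] of the simplex is compared with a slab of the real simplex
   of thickness [a]; the slab volumes telescope. *)
Lemma simplex_pts_lower c T : all_pos c -> 0 <= T ->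
  T ^ length c / (INR (fact (length c)) * prodl c) <= INR (length (simplex_pts c T)).
Proof.
revert T; induction c as [|a c IH]; intros T Hc HT.
- simpl. destruct (Rle_dec 0 T); [simpl; lra|lra].
- destruct (all_pos_tail _ _ Hc) as [Ha Hc'].
  set (d := length c). set (P := prodl c).
  assert (HP : 0 < P) by (apply prodl_pos; auto).
  assert (Hf : 0 < INR (fact d)) by (apply lt_0_INR, lt_O_fact).
  assert (HSd : 0 < INR (S d)) by (apply lt_0_INR; lia).
  set (H := fun x => pos_pow x (S d) / (INR (fact (S d)) * (a * P))).
  change (length (a :: c)) with (S d). change (prodl (a :: c)) with (a * P).
  rewrite length_simplex_pts_cons. set (K := Z.to_nat (up (T / a))).
  assert (HK : T - a * INR K < 0) by (apply up_div_gt; auto).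
  apply Rle_trans with (rsum K (fun x => H (T - a * INR x) - H (T - a * INR (S x)))).
  + rewrite rsum_telescope. unfold H, pos_pow. simpl (INR 0).
    rewrite Rmult_0_r, Rminus_0_r.
    destruct (Rle_dec 0 T), (Rle_dec 0 (T - a * INR K)); lra.
  + apply rsum_le. intros x _. set (q := T - a * INR x).
    replace (T - a * INR (S x)) with (q - a) by (unfold q; rewrite S_INR; ring).
    destruct (Rle_dec 0 q) as [Hq|Hq].
    * apply Rle_trans with (q ^ d / (INR (fact d) * P)); [|apply IH; auto].
      unfold H, Rdiv. rewrite <- Rmult_minus_distr_r, fact_S_INR.
      apply Rle_trans with (INR (S d) * a * q ^ d * / (INR (S d) * INR (fact d) * (a * P))).
      -- apply Rmult_le_compat_r; [|apply pos_pow_step_le; auto].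
         left; apply Rinv_0_lt_compat. repeat apply Rmult_lt_0_compat; auto.
      -- right. field. repeat split; lra.
    * unfold H, pos_pow. destruct (Rle_dec 0 q), (Rle_dec 0 (q - a)); try lra.
      unfold Rdiv. rewrite Rmult_0_l, Rminus_0_r. apply pos_INR.
Qed.

Lemma simplex_pts_upper c T : all_pos c -> 0 <= T ->
  INR (length (simplex_pts c T)) <= (T + suml c) ^ length c / (INR (fact (length c)) * prodl c).
Proof.
revert T; induction c as [|a c IH]; intros T Hc HT.
- simpl. destruct (Rle_dec 0 T); [simpl; lra|lra].
- destruct (all_pos_tail _ _ Hc) as [Ha Hc'].
  set (d := length c). set (P := prodl c). set (S := suml c).
  assert (HP : 0 < P) by (apply prodl_pos; auto).
  assert (HS : 0 <= S) by (apply suml_ge0; auto).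
  assert (Hf : 0 < INR (fact d)) by (apply lt_0_INR, lt_O_fact).
  assert (HSd : 0 < INR (Datatypes.S d)) by (apply lt_0_INR; lia).
  assert (Hden : 0 < INR (fact (Datatypes.S d)) * (a * P))
    by (rewrite fact_S_INR; repeat apply Rmult_lt_0_compat; auto).
  set (G := fun x => pos_pow (x + S) (Datatypes.S d) / (INR (fact (Datatypes.S d)) * (a * P))).
  change (length (a :: c)) with (Datatypes.S d). change (prodl (a :: c)) with (a * P).
  change (suml (a :: c)) with (a + S).
  rewrite length_simplex_pts_cons. set (K := Z.to_nat (up (T / a))).
  apply Rle_trans with (rsum K (fun x => G (T - a * INR x + a) - G (T - a * INR (Datatypes.S x) + a))).
  + apply rsum_le. intros x _. set (q := T - a * INR x).
    replace (T - a * INR (Datatypes.S x) + a) with q by (unfold q; rewrite S_INR; ring).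
    unfold G, Rdiv. rewrite <- Rmult_minus_distr_r.
    destruct (Rle_dec 0 q) as [Hq|Hq].
    * apply Rle_trans with ((q + S) ^ d / (INR (fact d) * P)); [apply IH; auto|].
      replace (q + a + S) with (q + S + a) by ring.
      apply Rle_trans with (INR (Datatypes.S d) * a * (q + S) ^ d
                              * / (INR (fact (Datatypes.S d)) * (a * P))).
      -- right. rewrite fact_S_INR. field. repeat split; lra.
      -- apply Rmult_le_compat_r; [left; apply Rinv_0_lt_compat; auto|].
         apply pos_pow_step_ge; lra.
    * rewrite simplex_pts_neg by (auto; lra). simpl (INR (length nil)).
      apply Rmult_le_pos; [|left; apply Rinv_0_lt_compat; auto].
      assert (pos_pow (q + S) (Datatypes.S d) <= pos_pow (q + a + S) (Datatypes.S d))
        by (apply pos_pow_le; lra). lra.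
  + rewrite (rsum_telescope K (fun x => G (T - a * INR x + a))). simpl (INR 0).
    rewrite Rmult_0_r, Rminus_0_r.
    assert (0 <= G (T - a * INR K + a))
      by (apply Rmult_le_pos; [apply pos_pow_ge0|left; apply Rinv_0_lt_compat; auto]).
    unfold G at 1, pos_pow. destruct (Rle_dec 0 (T + a + S)); [|lra].
    replace (T + (a + S)) with (T + a + S) by ring. lra.
Qed.

(** * Lattice points of the truncated dual cone *)

Definition in_zpair_image n v (k : nat -> Z) : Prop :=
  exists z, forall i, (i < n)%nat -> zpair n v z i = IZR (k i).

Definition zpair_preimage n v (k : nat -> Z) : nat -> Z :=
  epsilon (inhabits (fun _ => 0%Z)) (fun z => forall i, (i < n)%nat -> zpair n v z i = IZR (k i)).

Lemma zpair_preimage_spec n v k : in_zpair_image n v k ->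
  forall i, (i < n)%nat -> zpair n v (zpair_preimage n v k) i = IZR (k i).
Proof.
exact (epsilon_spec (inhabits (fun _ => 0%Z))
         (fun z => forall i, (i < n)%nat -> zpair n v z i = IZR (k i))).
Qed.

Lemma zpair_ext n v z z' i : (forall j, (j < n)%nat -> z j = z' j) -> zpair n v z i = zpair n v z' i.
Proof. intros H; unfold zpair; apply rsum_ext; intros; rewrite H; auto. Qed.

Lemma zpair_inj n v : lin_indep n v -> forall z z',
  (forall i, (i < n)%nat -> zpair n v z i = zpair n v z' i) ->
  forall j, (j < n)%nat -> z j = z' j.
Proof.
intros Hli z z' H j Hj. apply eq_IZR.
enough (IZR (z j) - IZR (z' j) = 0) by lra.
apply (pairing_eq0 n v Hli (fun j => IZR (z j) - IZR (z' j))); auto.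
intros i Hi. specialize (H i Hi). unfold zpair in H.
rewrite (rsum_ext _ _ (fun j => IZR (z j) * IZR (v i j) - IZR (z' j) * IZR (v i j))) by (intros; ring).
rewrite rsum_sub, H. ring.
Qed.

Lemma in_zpair_image_ext n v k k' :
  (forall i, (i < n)%nat -> k i = k' i) -> in_zpair_image n v k -> in_zpair_image n v k'.
Proof. intros H [z Hz]. exists z. intros i Hi. rewrite Hz, H; auto. Qed.

Lemma in_zpair_image_shift n v (D : Z) (zD : nat -> nat -> Z) :
  (forall i, (i < n)%nat -> forall i', (i' < n)%nat -> zpair n v (zD i) i' = kron i' i * IZR D) ->
  forall k t, in_zpair_image n v k -> in_zpair_image n v (fun i => k i + D * t i)%Z.
Proof.
intros HzD k t [z Hz].
exists (fun j => z j + zsum n (fun i' => t i' * zD i' j))%Z. intros i Hi.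
unfold zpair. rewrite (rsum_ext _ _ (fun j => IZR (z j) * IZR (v i j) +
   rsum n (fun i' => IZR (t i') * (IZR (zD i' j) * IZR (v i j))))).
- rewrite rsum_add. fold (zpair n v z i). rewrite Hz, rsum_comm by auto.
  rewrite (rsum_ext _ _ (fun i' => kron i' i * (IZR D * IZR (t i')))).
  + rewrite rsum_kron, plus_IZR, mult_IZR by auto. ring.
  + intros i' Hi'. rewrite rsum_scal. fold (zpair n v (zD i') i). rewrite HzD, kron_sym by auto. ring.
- intros j Hj. rewrite plus_IZR, zsum_IZR, Rmult_plus_distr_r. f_equal.
  rewrite Rmult_comm, <- rsum_scal. apply rsum_ext. intros; rewrite mult_IZR; ring.
Qed.

Fixpoint box_pts (D : nat) (n : nat) : list (list nat) :=
  match n with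
  | O => nil :: nil
  | S k => flat_map (fun a => map (cons a) (box_pts D k)) (seq 0 D)
  end.

Lemma in_box_pts D n r : In r (box_pts D n) <-> length r = n /\ (forall x, In x r -> (x < D)%nat).
Proof.
revert r; induction n; intros r; simpl.
- split.
  + intros [<-|[]]. split; auto. intros x [].
  + intros [H _]. destruct r; simpl in H; auto; lia.
- rewrite in_flat_map. split.
  + intros [a [Ha Hr]]. apply in_map_iff in Hr. destruct Hr as [r' [<- Hr']].
    apply IHn in Hr'. apply in_seq in Ha. simpl. split; [lia|].
    intros x [<-|Hx]; [lia|]. apply Hr'; auto.
  + intros [H1 H2]. destruct r as [|a r]; simpl in H1; [lia|]. exists a. split.
    * apply in_seq. assert (a < D)%nat by (apply H2; simpl; auto). lia.
    * apply in_map, IHn. split; [lia|]. intros; apply H2; simpl; auto.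
Qed.

Lemma box_pts_NoDup D n : NoDup (box_pts D n).
Proof. induction n; simpl; [repeat constructor; auto|]. apply NoDup_map_cons_flat_map; auto. Qed.

Lemma wsum_rsum n c j : length c = n -> length j = n ->
  wsum c j = rsum n (fun i => nth i c 0 * INR (nth i j 0%nat)).
Proof.
revert c j; induction n; intros c j Hc Hj.
- destruct c, j; simpl in *; try lia; auto.
- destruct c as [|a c], j as [|x j]; simpl in Hc, Hj; try lia.
  rewrite rsum_shift. simpl. rewrite IHn by lia. auto.
Qed.

Definition list_zvec (z : list Z) (j : nat) : Z := nth j z 0%Z.
Definition zvec_list (n : nat) (f : nat -> Z) : list Z := map f (seq 0 n).
Definition nat_zvec (r : list nat) (i : nat) : Z := Z.of_nat (nth i r 0%nat).

Lemma list_zvec_list n f j : (j < n)%nat -> list_zvec (zvec_list n f) j = f j.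
Proof. intros; apply nth_map_seq; auto. Qed.

Lemma length_zvec_list n f : length (zvec_list n f) = n.
Proof. unfold zvec_list. rewrite length_map, length_seq. reflexivity. Qed.

Definition shifted_residue (D : Z) (r j : list nat) (i : nat) : Z :=
  (nat_zvec r i + D * nat_zvec j i)%Z.

(* Representatives in [[0, D)^n] of the classes of the pairing image modulo [D Z^n]. *)
Definition residues n v (D : Z) : list (list nat) :=
  filter (fun r => if excluded_middle_informative (in_zpair_image n v (nat_zvec r)) then true else false)
         (box_pts (Z.to_nat D) n).

Definition scaled_coords n (D : Z) (b : nat -> R) : list R := map (fun i => IZR D * b i) (seq 0 n).

Definition weight n (b : nat -> R) (r : list nat) : R := rsum n (fun i => b i * INR (nth i r 0%nat)).

(* The points [z] with [z / m] in the truncated dual cone: their pairings with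
   the [v i] are a residue plus [D] times a point of a simplex. *)
Definition dual_lattice_pts n v D b (m : nat) : list (list Z) :=
  flat_map (fun r => map (fun j => zvec_list n (zpair_preimage n v (shifted_residue D r j)))
                         (simplex_pts (scaled_coords n D b) (INR m - weight n b r)))
           (residues n v D).

Lemma in_residues n v D r :
  In r (residues n v D) <-> In r (box_pts (Z.to_nat D) n) /\ in_zpair_image n v (nat_zvec r).
Proof.
unfold residues. rewrite filter_In.
destruct (excluded_middle_informative _); intuition congruence.
Qed.

Lemma dot_lattice_pt n v z m i :
  dot n (lattice_pt n z m) (zvec (v i)) = zpair n v (list_zvec z) i / INR m.
Proof.
unfold dot, zpair, lattice_pt, zvec, list_zvec, Rdiv.
rewrite Rmult_comm, <- rsum_scal. apply rsum_ext; intros; ring.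
Qed.

Lemma dual_trunc_iff n v w u : lin_indep n v ->
  dual_trunc n v w u <-> (forall i, (i < n)%nat -> 0 <= dot n u (zvec (v i))) /\
      rsum n (fun i => coord n v w i * dot n u (zvec (v i))) <= 1.
Proof. intros Hli. unfold dual_trunc. rewrite (in_dual_iff n v Hli), (dot_coord n v Hli). tauto. Qed.

Lemma all_pos_scaled_coords n D b :
  (0 < D)%Z -> (forall i, (i < n)%nat -> 0 < b i) -> all_pos (scaled_coords n D b).
Proof.
intros HD Hb a Ha. apply in_map_iff in Ha. destruct Ha as [i [<- Hi]].
apply in_seq in Hi. apply Rmult_lt_0_compat; [apply IZR_lt; auto|apply Hb; lia].
Qed.

Lemma length_scaled_coords n D b : length (scaled_coords n D b) = n.
Proof. unfold scaled_coords; rewrite length_map, length_seq; auto. Qed.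

Lemma wsum_scaled_coords n D b j : length j = n ->
  wsum (scaled_coords n D b) j = rsum n (fun i => IZR D * b i * INR (nth i j 0%nat)).
Proof.
intros H. rewrite (wsum_rsum n) by (auto; apply length_scaled_coords).
apply rsum_ext. intros i Hi. unfold scaled_coords. rewrite nth_map_seq; auto.
Qed.

Lemma weight_shifted_residue n D b r j :
  rsum n (fun i => b i * IZR (shifted_residue D r j i)) =
  weight n b r + rsum n (fun i => IZR D * b i * INR (nth i j 0%nat)).
Proof.
unfold weight. rewrite <- rsum_add. apply rsum_ext. intros i _.
unfold shifted_residue, nat_zvec. rewrite plus_IZR, mult_IZR, <- !INR_IZR_INZ. ring.
Qed.

Section DualLatticePoints.
Variables (n : nat) (v : nat -> nat -> Z) (D : Z) (zD : nat -> nat -> Z).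
Hypothesis Hli : lin_indep n v.
Hypothesis HD : (0 < D)%Z.
Hypothesis HzD : forall i, (i < n)%nat -> forall i', (i' < n)%nat ->
  zpair n v (zD i) i' = kron i' i * IZR D.
Variable w : nat -> R.
Hypothesis Hb : forall i, (i < n)%nat -> 0 < coord n v w i.
Variable m : nat.
Hypothesis Hm : (1 <= m)%nat.

Let b := coord n v w.

Lemma zpair_preimage_shifted_residue r j i : In r (residues n v D) -> (i < n)%nat ->
  zpair n v (list_zvec (zvec_list n (zpair_preimage n v (shifted_residue D r j)))) i =
  IZR (shifted_residue D r j i).
Proof.
intros Hr Hi. apply in_residues in Hr. destruct Hr as [_ Hr].
rewrite <- (zpair_preimage_spec n v (shifted_residue D r j)); auto.
- apply zpair_ext. intros; apply list_zvec_list; auto.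
- apply (in_zpair_image_shift n v D zD HzD _ (nat_zvec j) Hr).
Qed.

Lemma residue_decomposition k : (forall i, (i < n)%nat -> (0 <= k i)%Z) -> in_zpair_image n v k ->
  exists r j, In r (residues n v D) /\ length j = n /\
    forall i, (i < n)%nat -> shifted_residue D r j i = k i.
Proof.
intros Hk HL.
exists (map (fun i => Z.to_nat (k i mod D)) (seq 0 n)), (map (fun i => Z.to_nat (k i / D)) (seq 0 n)).
assert (Hmod : forall i, (0 <= k i mod D < D)%Z) by (intros; apply Z.mod_pos_bound; lia).
split; [|split].
- apply in_residues. split.
  + apply in_box_pts. rewrite length_map, length_seq. split; auto.
    intros x Hx. apply in_map_iff in Hx. destruct Hx as [i [<- _]].
    specialize (Hmod i). apply Z2Nat.inj_lt; lia.
  + apply (in_zpair_image_ext n v (fun i => k i + D * (- (k i / D)))%Z).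
    * intros i Hi. unfold nat_zvec. rewrite nth_map_seq, Z2Nat.id by (auto; apply Hmod).
      rewrite (Z_div_mod_eq_full (k i) D) at 1. ring.
    * apply (in_zpair_image_shift n v D zD HzD); auto.
- rewrite length_map, length_seq. reflexivity.
- intros i Hi. unfold shifted_residue, nat_zvec. rewrite !nth_map_seq by auto.
  assert (0 <= k i / D)%Z by (apply Z.div_pos; [apply Hk; auto|lia]).
  rewrite !Z2Nat.id by (auto; apply Hmod).
  rewrite (Z_div_mod_eq_full (k i) D) at 3. ring.
Qed.

Lemma zpair_lattice_pt z i :
  dot n (lattice_pt n z m) (zvec (v i)) * INR m = zpair n v (list_zvec z) i.
Proof. rewrite dot_lattice_pt. field. apply not_0_INR. lia. Qed.

Lemma dual_lattice_pts_sound r j : In r (residues n v D) ->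
  In j (simplex_pts (scaled_coords n D b) (INR m - weight n b r)) ->
  dual_trunc n v w (lattice_pt n (zvec_list n (zpair_preimage n v (shifted_residue D r j))) m).
Proof.
intros Hr Hj.
assert (Hmp : 0 < INR m) by (apply lt_0_INR; lia).
apply in_simplex_pts in Hj; [|apply all_pos_scaled_coords; auto].
rewrite length_scaled_coords in Hj. destruct Hj as [Hjl Hjw].
rewrite wsum_scaled_coords in Hjw by auto.
apply (dual_trunc_iff n v w _ Hli). split.
- intros i Hi. apply Rmult_le_reg_r with (INR m); auto.
  rewrite zpair_lattice_pt, zpair_preimage_shifted_residue, Rmult_0_l by auto.
  apply IZR_le. unfold shifted_residue, nat_zvec. lia.
- apply Rmult_le_reg_r with (INR m); auto. rewrite Rmult_1_l, Rmult_comm, <- rsum_scal.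
  rewrite (rsum_ext _ _ (fun i => b i * IZR (shifted_residue D r j i))).
  + rewrite weight_shifted_residue. lra.
  + intros i Hi. rewrite <- zpair_preimage_shifted_residue, <- zpair_lattice_pt by auto.
    fold b. ring.
Qed.

Lemma dual_lattice_pts_complete z : length z = n -> dual_trunc n v w (lattice_pt n z m) ->
  exists r j, In r (residues n v D) /\
    In j (simplex_pts (scaled_coords n D b) (INR m - weight n b r)) /\
    z = zvec_list n (zpair_preimage n v (shifted_residue D r j)).
Proof.
intros Hzl Hz. apply (dual_trunc_iff n v w _ Hli) in Hz. destruct Hz as [H1 H2].
assert (Hmp : 0 < INR m) by (apply lt_0_INR; lia).
set (k := fun i => zsum n (fun j => list_zvec z j * v i j)%Z).
assert (Ek : forall i, IZR (k i) = zpair n v (list_zvec z) i).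
{ intros i. unfold k, zpair. rewrite zsum_IZR. apply rsum_ext. intros; rewrite mult_IZR; auto. }
destruct (residue_decomposition k) as [r [j [Hr [Hjl Hrj]]]].
{ intros i Hi. apply le_IZR. rewrite Ek, <- zpair_lattice_pt. apply Rmult_le_pos; auto; lra. }
{ exists (list_zvec z). intros i Hi. rewrite Ek. reflexivity. }
exists r, j. split; [exact Hr|split].
- apply in_simplex_pts; [apply all_pos_scaled_coords; auto|].
  rewrite length_scaled_coords, wsum_scaled_coords by auto. split; auto.
  assert (E : rsum n (fun i => b i * IZR (shifted_residue D r j i)) =
              INR m * rsum n (fun i => coord n v w i * dot n (lattice_pt n z m) (zvec (v i)))).
  { rewrite <- rsum_scal. apply rsum_ext. intros i Hi.
    rewrite Hrj, Ek, <- zpair_lattice_pt by auto. fold b. ring. }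
  rewrite weight_shifted_residue in E.
  assert (INR m * rsum n (fun i => coord n v w i * dot n (lattice_pt n z m) (zvec (v i))) <= INR m)
    by (rewrite <- (Rmult_1_r (INR m)) at 2; apply Rmult_le_compat_l; lra).
  lra.
- apply nth_ext_n with n 0%Z; auto; [apply length_zvec_list|].
  intros i Hi. change (list_zvec z i = list_zvec (zvec_list n (zpair_preimage n v (shifted_residue D r j))) i).
  apply (zpair_inj n v Hli); auto. intros i' Hi'.
  rewrite zpair_preimage_shifted_residue, Hrj, Ek by auto. reflexivity.
Qed.

Lemma in_dual_lattice_pts z :
  In z (dual_lattice_pts n v D b m) <-> length z = n /\ dual_trunc n v w (lattice_pt n z m).
Proof.
unfold dual_lattice_pts. rewrite in_flat_map. split.
- intros [r [Hr Hz]]. apply in_map_iff in Hz. destruct Hz as [j [<- Hj]].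
  split; [apply length_zvec_list|]. apply dual_lattice_pts_sound; auto.
- intros [Hzl Hz]. destruct (dual_lattice_pts_complete z Hzl Hz) as [r [j [Hr [Hj ->]]]].
  exists r. split; auto. apply in_map_iff. exists j. auto.
Qed.

Lemma dual_lattice_pts_NoDup : NoDup (dual_lattice_pts n v D b m).
Proof.
assert (Hcp := all_pos_scaled_coords n D b HD Hb).
assert (Hinj : forall r r' j j', In r (residues n v D) -> In r' (residues n v D) ->
   In j (simplex_pts (scaled_coords n D b) (INR m - weight n b r)) ->
   In j' (simplex_pts (scaled_coords n D b) (INR m - weight n b r')) ->
   zvec_list n (zpair_preimage n v (shifted_residue D r j)) =
   zvec_list n (zpair_preimage n v (shifted_residue D r' j')) -> r = r' /\ j = j').
{ intros r r' j j' Hr Hr' Hj Hj' E.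
  assert (Ei : forall i, (i < n)%nat -> shifted_residue D r j i = shifted_residue D r' j' i).
  { intros i Hi. apply eq_IZR.
    rewrite <- (zpair_preimage_shifted_residue r j i), <- (zpair_preimage_shifted_residue r' j' i), E; auto. }
  apply in_residues in Hr, Hr'. destruct Hr as [Hr _], Hr' as [Hr' _].
  apply in_box_pts in Hr, Hr'. destruct Hr as [Hrl Hrb], Hr' as [Hrl' Hrb'].
  apply in_simplex_pts in Hj, Hj'; auto. rewrite length_scaled_coords in Hj, Hj'.
  destruct Hj as [Hjl _], Hj' as [Hjl' _].
  assert (Hd : forall i, (i < n)%nat ->
            nth i r 0%nat = nth i r' 0%nat /\ nth i j 0%nat = nth i j' 0%nat).
  { intros i Hi.
    assert (nth i r 0 < Z.to_nat D)%nat by (apply Hrb, nth_In; lia).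
    assert (nth i r' 0 < Z.to_nat D)%nat by (apply Hrb', nth_In; lia).
    specialize (Ei i Hi). unfold shifted_residue, nat_zvec in Ei.
    destruct (Z.div_mod_unique D (Z.of_nat (nth i j 0%nat)) (Z.of_nat (nth i j' 0%nat))
                (Z.of_nat (nth i r 0%nat)) (Z.of_nat (nth i r' 0%nat))); lia. }
  split; apply nth_ext_n with n 0%nat; auto; intros i Hi; apply Hd; auto. }
unfold dual_lattice_pts. apply NoDup_flat_map.
- apply NoDup_filter, box_pts_NoDup.
- intros r Hr. apply NoDup_map_inj; [apply simplex_pts_NoDup; auto|].
  intros j j' Hj Hj' E. apply (Hinj r r j j'); auto.
- intros r r' z Hr Hr' Hz Hz'. apply in_map_iff in Hz, Hz'.
  destruct Hz as [j [Ej Hj]], Hz' as [j' [Ej' Hj']].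
  apply (Hinj r r' j j'); auto. congruence.
Qed.

End DualLatticePoints.

(** * Volume of the truncated dual cone *)

Lemma pow_one_sub_ge n x : 0 <= x <= 1 -> 1 - INR n * x <= (1 - x) ^ n.
Proof.
intros Hx. induction n; [simpl; lra|]. rewrite S_INR. simpl.
assert (0 <= x * INR n) by (apply Rmult_le_pos; [lra|apply pos_INR]). nra.
Qed.

Lemma pow_one_add_le n x : 0 <= x <= 1 -> (1 + x) ^ n <= 1 + 3 ^ n * x.
Proof.
intros Hx. induction n; [simpl; lra|]. simpl.
assert (1 <= 3 ^ n) by (apply pow_R1_Rle; lra).
assert ((1 + x) * (1 + x) ^ n <= (1 + x) * (1 + 3 ^ n * x)) by (apply Rmult_le_compat_l; lra).
assert (3 ^ n * (x * x) <= 3 ^ n * x) by (apply Rmult_le_compat_l; nra).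
nra.
Qed.

Lemma INR_le_pow3 n : INR n <= 3 ^ n.
Proof.
induction n; [simpl; lra|]. rewrite S_INR. simpl.
assert (1 <= 3 ^ n) by (apply pow_R1_Rle; lra). lra.
Qed.

Lemma has_volume_of_sandwich n K V S : 0 <= V -> 0 <= S ->
  (forall m : nat, (1 <= m)%nat -> S <= INR m -> exists L, NoDup L /\
     (forall z, In z L <-> length z = n /\ K (lattice_pt n z m)) /\
     V * (1 - S / INR m) ^ n <= INR (length L) / INR m ^ n <= V * (1 + S / INR m) ^ n) ->
  has_volume n K V.
Proof.
intros HV HS Hsand eps Heps.
set (C := V * 3 ^ n * S).
assert (HC : 0 <= C) by (apply Rmult_le_pos; [apply Rmult_le_pos; [|apply pow_le]|]; lra).
assert (HCe : 0 <= C / eps) by (apply Rmult_le_pos; [|left; apply Rinv_0_lt_compat]; lra).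
exists (Z.to_nat (up (C / eps + S))). intros m HmM Hm1.
assert (Hmr : C / eps + S < INR m).
{ destruct (archimed (C / eps + S)) as [H1 _].
  apply le_INR in HmM. rewrite INR_IZR_INZ, Z2Nat.id in HmM; [lra|]. apply le_IZR. lra. }
assert (Hmp : 0 < INR m) by (apply lt_0_INR; lia).
destruct (Hsand m Hm1 ltac:(lra)) as [L [HL [HLz [Hlo Hhi]]]].
exists L. split; [exact HL|split; [exact HLz|]].
set (x := S / INR m) in *.
assert (Hx : 0 <= x <= 1).
{ unfold x. split; [apply Rmult_le_pos; [|left; apply Rinv_0_lt_compat]; lra|].
  apply Rmult_le_reg_r with (INR m); auto. unfold Rdiv. rewrite Rmult_assoc, Rinv_l; lra. }
assert (HVx : V * 3 ^ n * x < eps).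
{ unfold x. replace (V * 3 ^ n * (S / INR m)) with (C / INR m) by (unfold C; field; lra).
  apply Rmult_lt_reg_r with (INR m); auto. unfold Rdiv. rewrite Rmult_assoc, Rinv_l by lra.
  replace C with (C / eps * eps) by (field; lra). nra. }
assert (P1 := pow_one_sub_ge n x Hx). assert (P2 := pow_one_add_le n x Hx).
assert (P3 := INR_le_pow3 n).
assert (V * (1 - INR n * x) <= V * (1 - x) ^ n) by (apply Rmult_le_compat_l; auto).
assert (V * (1 + x) ^ n <= V * (1 + 3 ^ n * x)) by (apply Rmult_le_compat_l; auto).
assert (INR n * x <= 3 ^ n * x) by (apply Rmult_le_compat_r; lra).
apply Rabs_def1; nra.
Qed.

Lemma has_volume_unique n K a c : has_volume n K a -> has_volume n K c -> a = c.
Proof.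
intros Ha Hc. destruct (Req_dec a c) as [|Hne]; auto. exfalso.
set (e := Rabs (a - c) / 2).
assert (He : 0 < e) by (unfold e; apply Rdiv_lt_0_compat; [apply Rabs_pos_lt|]; lra).
destruct (Ha e He) as [M1 H1], (Hc e He) as [M2 H2].
set (m := (M1 + M2 + 1)%nat).
destruct (H1 m ltac:(unfold m; lia) ltac:(unfold m; lia)) as [L1 [N1 [S1 B1]]].
destruct (H2 m ltac:(unfold m; lia) ltac:(unfold m; lia)) as [L2 [N2 [S2 B2]]].
assert (E : length L1 = length L2).
{ apply Nat.le_antisymm; apply NoDup_incl_length; auto; intros z Hz.
  - apply S2, S1; auto.
  - apply S1, S2; auto. }
rewrite E in B1. unfold e in *.
assert (Rabs (a - c) <= Rabs (INR (length L2) / INR m ^ n - c) + Rabs (INR (length L2) / INR m ^ n - a)).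
{ replace (a - c) with ((INR (length L2) / INR m ^ n - c) - (INR (length L2) / INR m ^ n - a)) by ring.
  eapply Rle_trans; [apply Rabs_triang|]. rewrite Rabs_Ropp. lra. }
lra.
Qed.

Lemma Vol_has_volume n K a : has_volume n K a -> Vol n K = a.
Proof.
intros H. apply (has_volume_unique n K); auto.
apply (epsilon_spec (inhabits 0) (has_volume n K)). exists a; auto.
Qed.

Section DualVolume.
Variables (n : nat) (v : nat -> nat -> Z) (D : Z) (zD : nat -> nat -> Z).
Hypothesis Hli : lin_indep n v.
Hypothesis HD : (0 < D)%Z.
Hypothesis HzD : forall i, (i < n)%nat -> forall i', (i' < n)%nat ->
  zpair n v (zD i) i' = kron i' i * IZR D.

Let NR := INR (length (residues n v D)).

Lemma residues_nonempty : 0 < NR.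
Proof.
unfold NR. apply lt_0_INR. destruct (residues n v D) eqn:E; simpl; [|lia].
enough (Hin : In (repeat 0%nat n) (residues n v D)) by (rewrite E in Hin; destruct Hin).
apply in_residues. split.
- apply in_box_pts. split; [apply repeat_length|].
  intros x Hx. apply repeat_spec in Hx. lia.
- exists (fun _ => 0%Z). intros i Hi. unfold zpair, nat_zvec. rewrite nth_repeat.
  rewrite (rsum_ext _ _ (fun _ => 0)) by (intros; simpl; ring). apply rsum_zero.
Qed.

Variable w : nat -> R.
Hypothesis Hb : forall i, (i < n)%nat -> 0 < coord n v w i.

Let b := coord n v w.
Let S := IZR D * rsum n b.
Let P := INR (fact n) * (IZR D ^ n * rprod n b).

Lemma dual_lattice_pts_bounds m : (1 <= m)%nat -> S <= INR m ->
  NR * ((INR m - S) ^ n / P) <= INR (length (dual_lattice_pts n v D b m)) <=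
  NR * ((INR m + S) ^ n / P).
Proof.
intros Hm HS. apply length_flat_map_bounds. intros r Hr. rewrite length_map.
assert (Hcp := all_pos_scaled_coords n D b HD Hb).
assert (Hr0 : 0 <= weight n b r <= S).
{ apply in_residues in Hr. destruct Hr as [Hr _]. apply in_box_pts in Hr. destruct Hr as [Hrl Hrb].
  unfold weight, S. split.
  - apply rsum_ge0. intros i Hi. apply Rmult_le_pos; [left; apply Hb; auto|apply pos_INR].
  - rewrite <- rsum_scal. apply rsum_le. intros i Hi.
    assert (Hri : (nth i r 0 < Z.to_nat D)%nat) by (apply Hrb, nth_In; lia).
    apply lt_INR in Hri. rewrite (INR_IZR_INZ (Z.to_nat D)), Z2Nat.id in Hri by lia.
    assert (0 < b i) by (apply Hb; auto). nra. }
assert (Ep : INR (fact n) * prodl (scaled_coords n D b) = P).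
{ unfold prodl, scaled_coords, P. rewrite fold_Rmult_map_seq, rprod_scal. reflexivity. }
assert (Es : suml (scaled_coords n D b) = S).
{ unfold suml, scaled_coords, S. rewrite fold_Rplus_map_seq, rsum_scal. reflexivity. }
assert (Hlo := simplex_pts_lower _ (INR m - weight n b r) Hcp ltac:(lra)).
assert (Hhi := simplex_pts_upper _ (INR m - weight n b r) Hcp ltac:(lra)).
rewrite length_scaled_coords, Ep in Hlo, Hhi. rewrite Es in Hhi.
assert (HP : 0 < P).
{ apply Rmult_lt_0_compat; [apply lt_0_INR, lt_O_fact|].
  apply Rmult_lt_0_compat; [apply pow_lt, IZR_lt; auto|apply rprod_pos; auto]. }
split; [eapply Rle_trans; [|exact Hlo] | eapply Rle_trans; [exact Hhi|]];
  unfold Rdiv; apply Rmult_le_compat_r; try (left; apply Rinv_0_lt_compat; auto);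
  apply pow_incr; lra.
Qed.

Lemma dual_trunc_has_volume : has_volume n (dual_trunc n v w) (NR / P).
Proof.
assert (HP : 0 < P).
{ apply Rmult_lt_0_compat; [apply lt_0_INR, lt_O_fact|].
  apply Rmult_lt_0_compat; [apply pow_lt, IZR_lt; auto|apply rprod_pos; auto]. }
assert (HNR := residues_nonempty).
apply has_volume_of_sandwich with S.
- apply Rmult_le_pos; [|left; apply Rinv_0_lt_compat]; lra.
- apply Rmult_le_pos; [apply IZR_le; lia|]. apply rsum_ge0; intros; left; apply Hb; auto.
- intros m Hm HS. assert (Hmp : 0 < INR m) by (apply lt_0_INR; lia).
  exists (dual_lattice_pts n v D b m).
  split; [apply (dual_lattice_pts_NoDup n v D zD); auto|].
  split; [apply (in_dual_lattice_pts n v D zD); auto|].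
  destruct (dual_lattice_pts_bounds m Hm HS) as [Hlo Hhi].
  assert (Hmn : 0 < INR m ^ n) by (apply pow_lt; auto).
  replace (1 - S / INR m) with ((INR m - S) / INR m) by (field; lra).
  replace (1 + S / INR m) with ((INR m + S) / INR m) by (field; lra).
  unfold Rdiv in *. rewrite !Rpow_mult_distr, !pow_inv.
  replace (NR * / P * ((INR m - S) ^ n * / INR m ^ n)) with (NR * ((INR m - S) ^ n * / P) * / INR m ^ n) by ring.
  replace (NR * / P * ((INR m + S) ^ n * / INR m ^ n)) with (NR * ((INR m + S) ^ n * / P) * / INR m ^ n) by ring.
  split; apply Rmult_le_compat_r; auto; left; apply Rinv_0_lt_compat; auto.
Qed.

End DualVolume.

Lemma volfun_formula n v : lin_indep n v -> exists Q, 0 < Q /\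
  forall w, (forall i, (i < n)%nat -> 0 < coord n v w i) -> volfun n v w = Q / rprod n (coord n v w).
Proof.
intros Hli. destruct (scaled_dual_basis n v Hli) as [D [HD Hz]].
destruct (choice (fun i zi => (i < n)%nat ->
  forall i', (i' < n)%nat -> zpair n v zi i' = kron i' i * IZR D)) as [zD HzD].
{ intros i. destruct (lt_dec i n) as [Hi|Hi].
  - destruct (Hz i Hi) as [zi Hzi]. exists zi. auto.
  - exists (fun _ => 0%Z). lia. }
assert (HNR := residues_nonempty n v D).
assert (HDn : 0 < IZR D ^ n) by (apply pow_lt, IZR_lt; auto).
assert (Hf : 0 < INR (fact n)) by apply lt_0_INR, lt_O_fact.
exists (INR (length (residues n v D)) / (INR (fact n) * IZR D ^ n)). split.
{ apply Rdiv_lt_0_compat; auto. apply Rmult_lt_0_compat; auto. }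
intros w Hb. unfold volfun. rewrite (Vol_has_volume _ _ _ (dual_trunc_has_volume n v D zD Hli HD HzD w Hb)).
assert (0 < rprod n (coord n v w)) by (apply rprod_pos; auto).
field. repeat split; lra.
Qed.

(** * Critical points of the volume function *)

Lemma derivable_pt_lim_local f g x l : derivable_pt_lim f x l ->
  (exists del, 0 < del /\ forall t, Rabs (t - x) < del -> f t = g t) -> derivable_pt_lim g x l.
Proof.
intros Hf [del [Hdel Hfg]] eps Heps. destruct (Hf eps Heps) as [d Hd].
assert (Hm : 0 < Rmin d del) by (apply Rmin_pos; [apply cond_pos|auto]).
exists (mkposreal _ Hm). intros h Hh Hhd. simpl in Hhd.
rewrite <- !Hfg.
- apply Hd; auto. apply Rlt_le_trans with (Rmin d del); auto. apply Rmin_l.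
- replace (x - x) with 0 by ring. rewrite Rabs_R0; auto.
- replace (x + h - x) with h by ring. apply Rlt_le_trans with (Rmin d del); auto. apply Rmin_r.
Qed.

Lemma derivable_pt_lim_affine a g : derivable_pt_lim (fun t => a + g * t) 0 g.
Proof.
assert (H := derivable_pt_lim_plus (fct_cte a) (mult_real_fct g id) 0 0 (g * 1)
  (derivable_pt_lim_const a 0) (derivable_pt_lim_scal id g 0 1 (derivable_pt_lim_id 0))).
replace (0 + g * 1) with g in H by ring. exact H.
Qed.

Lemma derivable_pt_lim_rprod_affine n (a g : nat -> R) : (forall i, (i < n)%nat -> a i <> 0) ->
  derivable_pt_lim (fun t => rprod n (fun i => a i + g i * t)) 0
    (rprod n a * rsum n (fun i => g i / a i)).
Proof.
induction n; intros H.
- simpl. replace (1 * 0) with 0 by ring. apply derivable_pt_lim_const.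
- assert (HM := derivable_pt_lim_mult _ _ 0 _ _ (IHn (fun i Hi => H i ltac:(lia)))
                  (derivable_pt_lim_affine (a n) (g n))).
  assert (Hn : a n <> 0) by (apply H; lia).
  assert (E : rprod n (fun i => a i + g i * 0) = rprod n a) by (apply rprod_ext; intros; ring).
  match type of HM with derivable_pt_lim _ _ ?L =>
    replace (rprod (S n) a * rsum (S n) (fun i => g i / a i)) with L end.
  + exact HM.
  + rewrite E. simpl. field. auto.
Qed.

Lemma derivable_pt_lim_inv_rprod_affine n Q (a g : nat -> R) : (forall i, (i < n)%nat -> 0 < a i) ->
  derivable_pt_lim (fun t => Q / rprod n (fun i => a i + g i * t)) 0
    (- Q / rprod n a * rsum n (fun i => g i / a i)).
Proof.
intros H.
assert (Hne : forall i, (i < n)%nat -> a i <> 0) by (intros i Hi; specialize (H i Hi); lra).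
assert (E : rprod n (fun i => a i + g i * 0) = rprod n a) by (apply rprod_ext; intros; ring).
assert (Hp : 0 < rprod n a) by (apply rprod_pos; auto).
assert (HD := derivable_pt_lim_div (fct_cte Q) (fun t => rprod n (fun i => a i + g i * t)) 0 0 _
   (derivable_pt_lim_const Q 0) (derivable_pt_lim_rprod_affine n a g Hne)
   ltac:(cbv beta; rewrite E; lra)).
unfold fct_cte in HD. cbv beta in HD. rewrite E in HD.
replace (- Q / rprod n a * rsum n (fun i => g i / a i))
  with ((0 * rprod n a - rprod n a * rsum n (fun i => g i / a i) * Q) / Rsqr (rprod n a))
  by (unfold Rsqr; field; lra).
exact HD.
Qed.

Lemma min_pos_bound n (a : nat -> R) : (forall i, (i < n)%nat -> 0 < a i) ->
  exists mu, 0 < mu /\ forall i, (i < n)%nat -> mu <= a i.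
Proof.
induction n; intros H; [exists 1; split; [lra|intros; lia]|].
destruct (IHn (fun i Hi => H i ltac:(lia))) as [mu [H1 H2]].
exists (Rmin mu (a n)). split; [apply Rmin_pos; [auto|apply H; lia]|].
intros i Hi. destruct (Nat.eq_dec i n) as [->|]; [apply Rmin_r|].
eapply Rle_trans; [apply Rmin_l|apply H2; lia].
Qed.

Section Critical.
Variables (n : nat) (v : nat -> nat -> Z) (Q : R).
Hypothesis Hli : lin_indep n v.
Hypothesis HQ : 0 < Q.
Hypothesis HQf : forall w, (forall i, (i < n)%nat -> 0 < coord n v w i) ->
  volfun n v w = Q / rprod n (coord n v w).

(* Coordinates stay positive near [w0], where [volfun] is given by the formula. *)
Lemma volfun_derivative w0 h : (forall i, (i < n)%nat -> 0 < coord n v w0 i) ->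
  derivable_pt_lim (fun t => volfun n v (fun j => w0 j + t * h j)) 0
    (- Q / rprod n (coord n v w0) * rsum n (fun i => coord n v h i / coord n v w0 i)).
Proof.
intros Hb.
apply derivable_pt_lim_local
  with (fun t => Q / rprod n (fun i => coord n v w0 i + coord n v h i * t));
  [apply derivable_pt_lim_inv_rprod_affine; auto|].
destruct (min_pos_bound n _ Hb) as [mu [Hmu Hmui]].
set (G := rsum n (fun i => Rabs (coord n v h i)) + 1).
assert (HG : 0 < G).
{ assert (0 <= rsum n (fun i => Rabs (coord n v h i))) by (apply rsum_ge0; intros; apply Rabs_pos).
  unfold G; lra. }
exists (mu / G). split; [apply Rdiv_lt_0_compat; auto|].
intros t Ht. rewrite Rminus_0_r in Ht.
assert (Hpos : forall i, (i < n)%nat -> 0 < coord n v w0 i + coord n v h i * t).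
{ intros i Hi.
  assert (Rabs (coord n v h i) <= G - 1) by (unfold G; ring_simplify;
    apply (rsum_term_le n (fun i => Rabs (coord n v h i))); auto; intros; apply Rabs_pos).
  assert (Rabs (coord n v h i * t) < mu).
  { rewrite Rabs_mult. assert (0 <= Rabs t) by apply Rabs_pos.
    apply Rle_lt_trans with (G * Rabs t); [apply Rmult_le_compat_r; lra|].
    apply Rmult_lt_reg_r with (/ G); [apply Rinv_0_lt_compat; auto|].
    rewrite Rmult_comm, <- Rmult_assoc, Rinv_l, Rmult_1_l by lra. exact Ht. }
  assert (mu <= coord n v w0 i) by auto.
  assert (HH := Rle_abs (- (coord n v h i * t))). rewrite Rabs_Ropp in HH. lra. }
rewrite HQf.
- f_equal. apply rprod_ext. intros i Hi. symmetry. apply coord_affine.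
- intros i Hi. rewrite coord_affine. auto.
Qed.

Lemma critical_iff_coord_const u w0 :
  canonical_weight n v u -> dot n u w0 = 1 -> (forall i, (i < n)%nat -> 0 < coord n v w0 i) ->
  critical_on_hyperplane n (volfun n v) u w0 <->
  forall i i', (i < n)%nat -> (i' < n)%nat -> coord n v w0 i = coord n v w0 i'.
Proof.
intros Hu Hdot Hb.
assert (HP : 0 < rprod n (coord n v w0)) by (apply rprod_pos; auto).
assert (HQP : 0 < Q / rprod n (coord n v w0)) by (apply Rdiv_lt_0_compat; auto).
split.
- intros [_ Hcrit] i i' Hi Hi'.
  set (h := fun j => IZR (v i j) - IZR (v i' j)).
  assert (Hh : forall k, (k < n)%nat -> coord n v h k = kron k i - kron k i').
  { intros k Hk. unfold h.
    rewrite (coord_ext n v _ (fun j => 1 * zvec (v i) j + (-1) * zvec (v i') j)) by (intros; unfold zvec; ring).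
    rewrite coord_linear, !coord_generator by auto. ring. }
  assert (Hdh : dot n u h = 0).
  { unfold dot, h. rewrite (rsum_ext _ _ (fun j => u j * zvec (v i) j - u j * zvec (v i') j))
      by (intros; unfold zvec; ring).
    rewrite rsum_sub. fold (dot n u (zvec (v i))) (dot n u (zvec (v i'))). rewrite !Hu by auto. ring. }
  assert (E := uniqueness_limite _ _ _ _ (volfun_derivative w0 h Hb) (Hcrit h Hdh)).
  rewrite (rsum_ext _ _ (fun k => kron k i * / coord n v w0 k - kron k i' * / coord n v w0 k)),
    rsum_sub, !rsum_kron in E by (auto; intros k Hk; rewrite Hh by auto; unfold Rdiv; ring).
  assert (Hb1 := Hb i Hi). assert (Hb2 := Hb i' Hi').
  assert (Hz : / coord n v w0 i - / coord n v w0 i' = 0).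
  { apply Rmult_eq_reg_l with (- (Q / rprod n (coord n v w0))); [|lra].
    rewrite Rmult_0_r, <- E. unfold Rdiv. ring. }
  rewrite <- (Rinv_inv (coord n v w0 i)), <- (Rinv_inv (coord n v w0 i')). f_equal. lra.
- intros Hc. split; auto. intros h Hh.
  assert (Hsum : rsum n (fun i => coord n v h i / coord n v w0 i) = 0).
  { rewrite (rsum_ext _ _ (fun i => / coord n v w0 0%nat * coord n v h i)).
    - rewrite rsum_scal, <- (dot_canonical_weight n v Hli u h Hu), Hh. ring.
    - intros i Hi. rewrite (Hc i 0%nat) by lia. unfold Rdiv. ring. }
  assert (Hd := volfun_derivative w0 h Hb).
  rewrite Hsum, Rmult_0_r in Hd. exact Hd.
Qed.

End Critical.

Lemma dot_normalize n u xi : dot n u xi <> 0 -> dot n u (fun j => xi j / dot n u xi) = 1.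
Proof.
intros H. unfold dot at 1.
rewrite (rsum_ext _ _ (fun j => / dot n u xi * (u j * xi j))) by (intros; unfold Rdiv; ring).
rewrite rsum_scal. fold (dot n u xi). field. exact H.
Qed.

Lemma Kstable_iff_coord_const n v xi : (1 <= n)%nat -> lin_indep n v ->
  (forall i, (i < n)%nat -> 0 < coord n v xi i) ->
  Kstable n v xi <-> forall i i', (i < n)%nat -> (i' < n)%nat -> coord n v xi i = coord n v xi i'.
Proof.
intros Hn Hli Hx.
destruct (volfun_formula n v Hli) as [Q [HQ HQf]].
assert (Hnormal : forall u, canonical_weight n v u ->
  critical_on_hyperplane n (volfun n v) u (fun j => xi j / dot n u xi) <->
  forall i i', (i < n)%nat -> (i' < n)%nat -> coord n v xi i = coord n v xi i').
{ intros u Hu.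
  assert (Hs : 0 < dot n u xi).
  { rewrite (dot_canonical_weight n v Hli u xi Hu).
    apply Rlt_le_trans with (coord n v xi 0%nat); [apply Hx; lia|].
    apply rsum_term_le; [lia|]. intros; left; apply Hx; auto. }
  rewrite (critical_iff_coord_const n v Q Hli HQ HQf); auto.
  - setoid_rewrite (coord_div n v xi). split; intros H i i' Hi Hi'.
    + apply Rmult_eq_reg_r with (/ dot n u xi); [apply H; auto|].
      apply Rinv_neq_0_compat; lra.
    + rewrite (H i i') by auto. reflexivity.
  - apply dot_normalize. lra.
  - intros i Hi. rewrite coord_div. apply Rdiv_lt_0_compat; auto. }
split.
- intros [u [Hu Hcrit]]. apply (Hnormal u Hu). exact Hcrit.
- intros Hc. destruct (canonical_weight_exists n v Hli) as [u Hu].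
  exists u. split; [exact Hu|]. apply Hnormal; auto.
Qed.

Lemma coord_const_iff_multiple_sum n v xi : (1 <= n)%nat -> lin_indep n v ->
  (forall i, (i < n)%nat -> 0 < coord n v xi i) ->
  (forall i i', (i < n)%nat -> (i' < n)%nat -> coord n v xi i = coord n v xi i') <->
  exists c, 0 < c /\ forall j, (j < n)%nat -> xi j = c * rsum n (fun i => IZR (v i j)).
Proof.
intros Hn Hli Hx. split.
- intros Hc. exists (coord n v xi 0%nat). split; [apply Hx; lia|].
  intros j Hj. rewrite (coord_repr n v Hli xi j Hj), <- rsum_scal.
  apply rsum_ext. intros i Hi. rewrite (Hc i 0%nat) by lia. reflexivity.
- intros [c [_ Hxi]] i i' Hi Hi'.
  assert (Hcoord := coord_unique n v Hli xi (fun _ => c)).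
  rewrite !Hcoord; auto; intros j Hj; rewrite Hxi, <- rsum_scal; auto.
Qed.

Lemma quasi_regular_multiple_sum n v xi :
  (exists c, 0 < c /\ forall j, (j < n)%nat -> xi j = c * rsum n (fun i => IZR (v i j))) ->
  quasi_regular n xi.
Proof.
intros [c [Hc Hxi]]. exists c. split; [exact Hc|].
exists (fun j => inject_Z (zsum n (fun i => v i j))). intros j Hj.
rewrite Hxi by auto. unfold Q2R. simpl. rewrite zsum_IZR. field.
Qed.

Theorem mainTheorem5 (n : nat) (v : nat -> nat -> Z) (xi : nat -> R) :
  (1 <= n)%nat ->
  (forall i, (i < n)%nat -> primitive_vec n (v i)) ->
  lin_indep n v ->
  in_interior_sigma n v xi ->
  (Kstable n v xi <->
     exists c : R, (0 < c)%R /\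
       forall j, (j < n)%nat -> xi j = c * rsum n (fun i => IZR (v i j)))
  /\ (Kstable n v xi -> quasi_regular n xi).
Proof.
intros Hn _ Hli Hint.
assert (Hx := coord_interior_pos n v Hli xi Hint).
assert (HK : Kstable n v xi <->
  exists c, 0 < c /\ forall j, (j < n)%nat -> xi j = c * rsum n (fun i => IZR (v i j))).
{ rewrite (Kstable_iff_coord_const n v xi Hn Hli Hx). apply coord_const_iff_multiple_sum; auto. }
split; [exact HK|].
intros Hs. apply quasi_regular_multiple_sum with v. apply HK, Hs.
Qed.
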